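(* Let $\chi$ be a kernel, let $f:\mathbb{R}^+\to\mathbb{R}$ be bounded, and let $t\in\mathbb{R}^+$ be a point of non-removable jump discontinuity of $f$. For $\alpha\in\mathbb{R}$ the following are equivalent: (i) $\displaystyle\lim_{w\to\infty,\ w\log t\in\mathbb{Z}}(S_w^\chi f)(t)=\alpha f(t+0)+[1-\alpha-\chi(1)]f(t-0)+\chi(1)f(t)$; (ii) $\psi_\chi^-(1)=\alpha$; (iii) $\psi_\chi^+(1)=1-\alpha-\chi(1)$.
   Context: Let $\mathbb{R}^+=(0,\infty)$. For $\chi:\mathbb{R}^+\to\mathbb{R}$ and $\nu\ge 0$ set $M_\nu(\chi):=\sup_{u>0}\sum_{k\in\mathbb{Z}}|\chi(e^{-k}u)|\,|k-\log u|^\nu$ (with $|k-\log u|^0:=1$). A kernel is a function $\chi:\mathbb{R}^+\to\mathbb{R}$ such that (K1) $\sum_{k\in\mathbb{Z}}\chi(e^{-k}u)=1$ for every $u\in\mathbb{R}^+$, and (K2) $M_0(\chi)<\infty$ and $M_\nu(\chi)<\infty$ for some $\nu>0$. For a bounded $f:\mathbb{R}^+\to\mathbb{R}$, $w>0$ and $t\in\mathbb{R}^+$, the exponential sampling series is $(S_w^\chi f)(t)=\sum_{k\in\mathbb{Z}}\chi(e^{-k}t^w)\,f(e^{k/w})$. Define $\psi_\chi^+(u):=\sum_{k\in\mathbb{Z},\,k<\log u}\chi(e^{-k}u)$ and $\psi_\chi^-(u):=\sum_{k\in\mathbb{Z},\,k>\log u}\chi(e^{-k}u)$ for $u\in\mathbb{R}^+$.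 $f(t\pm0)$ denote the right/left limits of $f$ at $t$; $t$ is a non-removable jump discontinuity of $f$ if $f(t+0)$ and $f(t-0)$ exist, are finite, and $f(t+0)\ne f(t-0)$. The limit in (i) is taken as $w\to\infty$ through those $w>0$ with $w\log t\in\mathbb{Z}$. *)

From Stdlib Require Import Reals Lra ZArith.
From Coquelicot Require Import Coquelicot.
Open Scope R_scope.

(* Sum over k in Z of g k, as the sum of the two one-sided series
   k = 0,1,2,... and k = -1,-2,...  (all sums used are absolutely
   convergent under the kernel hypotheses). *)
Definition zsum (g : Z -> R) : R :=
  Series (fun n : nat => g (Z.of_nat n)) + Series (fun n : nat => g (- Z.of_nat (S n))%Z).

(* |x|^nu, with the convention |x|^0 := 1 (and 0^nu = 0 for nu > 0). *)
Definition pw (x nu : R) : R :=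
  if Req_EM_T nu 0 then 1
  else if Req_EM_T x 0 then 0 else Rpower (Rabs x) nu.

(* M_nu(chi) < +oo : the (nonnegative) series are bounded uniformly in u > 0,
   i.e. all symmetric partial sums sum_{|k|<=N} are bounded by a common B. *)
Definition M_finite (chi : R -> R) (nu : R) : Prop :=
  exists B : R, forall u : R, 0 < u -> forall N : nat,
    sum_f_R0 (fun n : nat =>
       let k := (Z.of_nat n - Z.of_nat N)%Z in
       Rabs (chi (exp (- IZR k) * u)) * pw (IZR k - ln u) nu) (2 * N) <= B.

Definition is_kernel (chi : R -> R) : Prop :=
  (forall u : R, 0 < u -> zsum (fun k => chi (exp (- IZR k) * u)) = 1) /\
  M_finite chi 0 /\ (exists nu : R, 0 < nu /\ M_finite chi nu).

Definition bounded_pos (f : R -> R) : Prop :=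
  exists B : R, forall x : R, 0 < x -> Rabs (f x) <= B.

Definition S_w (chi f : R -> R) (w t : R) : R :=
  zsum (fun k => chi (exp (- IZR k) * Rpower t w) * f (exp (IZR k / w))).

Definition psi_plus (chi : R -> R) (u : R) : R :=
  zsum (fun k => if Rlt_dec (IZR k) (ln u) then chi (exp (- IZR k) * u) else 0).

Definition psi_minus (chi : R -> R) (u : R) : R :=
  zsum (fun k => if Rlt_dec (ln u) (IZR k) then chi (exp (- IZR k) * u) else 0).

Definition lim_along_lattice (F : R -> R) (t L : R) : Prop :=
  forall eps : R, 0 < eps -> exists W : R, forall w : R,
    W < w -> 0 < w -> (exists m : Z, w * ln t = IZR m) -> Rabs (F w - L) < eps.

(* Write a_k = chi(e^{-k}).  At a parameter w > 0 with w log t = m in Z we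
   have t^w = e^m, so translating the summation index by m (legitimate for
   absolutely summable families over Z) gives
       (S_w f)(t) = sum_k a_k f(t e^{k/w}).
   As w -> oo the node t e^{k/w} tends to t from the right for k > 0 and
   from the left for k < 0, hence each sample tends to the value of the step
   profile (f(t+0) for k > 0, f(t-0) for k < 0, f(t) for k = 0).  Tannery's
   theorem (dominated convergence for series) then shows
       (S_w f)(t) -> f(t+0) psi^-(1) + f(t-0) psi^+(1) + f(t) chi(1),
   and the partition of unity gives psi^-(1) + psi^+(1) + chi(1) = 1.
   The candidate limit in (i) differs from this one by
   (alpha - psi^-(1)) (f(t+0) - f(t-0)), which yields (i) <-> (ii) since
   lattice limits are unique and the jump is non-removable; (ii) <-> (iii)
   is the partition of unity. *)

From Stdlib Require Import Reals Lra Lia ZArith.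
From Coquelicot Require Import Coquelicot.
Open Scope R_scope.

Lemma ex_series_bounded_partial_sums (a : nat -> R) (B : R) :
  (forall n, 0 <= a n) -> (forall N, sum_f_R0 a N <= B) -> ex_series a.
Proof.
  intros a_ge0 a_bnd.
  destruct (growing_cv (sum_f_R0 a)) as [l Hl].
  - intro n. simpl. specialize (a_ge0 (S n)). lra.
  - exists B. intros x [n ->]. apply a_bnd.
  - exists l. apply is_series_Reals. exact Hl.
Qed.

Lemma Series_first_only (a : nat -> R) : (forall n, a (S n) = 0) -> Series a = a 0%nat.
Proof.
  intro a_tail. apply is_series_unique, is_series_Reals.
  assert (partial : forall n, sum_f_R0 a n = a 0%nat).
  { induction n as [|n IH]; simpl; [reflexivity|]. rewrite a_tail, IH. ring. }
  intros eps eps_pos. exists 0%nat. intros n _.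
  unfold Rdist. rewrite partial, Rminus_eq_0, Rabs_R0. exact eps_pos.
Qed.

Lemma Series_tail_small (b : nat -> R) : ex_series b ->
  forall eps, 0 < eps -> exists N, Rabs (Series (fun k => b (S N + k)%nat)) < eps.
Proof.
  intros b_cv eps eps_pos.
  destruct (proj1 (is_series_Reals b _) (Series_correct b b_cv) eps eps_pos) as [N HN].
  exists N. specialize (HN N (le_n N)). unfold Rdist in HN.
  rewrite (Series_incr_n b (S N)) in HN by (lia || exact b_cv). simpl pred in HN.
  replace (sum_f_R0 b N - (sum_f_R0 b N + Series (fun k => b (S N + k)%nat)))
    with (- Series (fun k => b (S N + k)%nat)) in HN by ring.
  rewrite Rabs_Ropp in HN. exact HN.
Qed.

Definition zsummable (g : Z -> R) : Prop :=
  ex_series (fun n => Rabs (g (Z.of_nat n))) /\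
  ex_series (fun n => Rabs (g (- Z.of_nat (S n))%Z)).

Lemma zsummable_le (g h : Z -> R) (c : R) :
  (forall k, Rabs (g k) <= c * Rabs (h k)) -> zsummable h -> zsummable g.
Proof.
  intros g_le [h_pos h_neg]. split.
  - apply (@ex_series_le R_AbsRing R_CompleteNormedModule _ (fun n => c * Rabs (h (Z.of_nat n)))).
    + intro n. rewrite Rabs_Rabsolu. apply g_le.
    + exact (@ex_series_scal_l R_AbsRing R_NormedModule c _ h_pos).
  - apply (@ex_series_le R_AbsRing R_CompleteNormedModule _
                         (fun n => c * Rabs (h (- Z.of_nat (S n))%Z))).
    + intro n. rewrite Rabs_Rabsolu. apply g_le.
    + exact (@ex_series_scal_l R_AbsRing R_NormedModule c _ h_neg).
Qed.

Lemma zsummable_halves (g : Z -> R) : zsummable g ->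
  ex_series (fun n => g (Z.of_nat n)) /\ ex_series (fun n => g (- Z.of_nat (S n))%Z).
Proof. intros [g_pos g_neg]. split; apply ex_series_Rabs; assumption. Qed.

Lemma zsum_ext (g h : Z -> R) : (forall k, g k = h k) -> zsum g = zsum h.
Proof. intro gh. unfold zsum. f_equal; apply Series_ext; intro; apply gh. Qed.

Lemma zsum_plus (g h : Z -> R) : zsummable g -> zsummable h ->
  zsum (fun k => g k + h k) = zsum g + zsum h.
Proof.
  intros g_sum h_sum.
  destruct (zsummable_halves g g_sum), (zsummable_halves h h_sum).
  unfold zsum. rewrite !Series_plus by assumption. ring.
Qed.

Lemma zsum_minus (g h : Z -> R) : zsummable g -> zsummable h ->
  zsum (fun k => g k - h k) = zsum g - zsum h.
Proof.
  intros g_sum h_sum.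
  destruct (zsummable_halves g g_sum), (zsummable_halves h h_sum).
  unfold zsum. rewrite !Series_minus by assumption. ring.
Qed.

Lemma zsum_scal (c : R) (g : Z -> R) : zsum (fun k => c * g k) = c * zsum g.
Proof. unfold zsum. rewrite !Series_scal_l. ring. Qed.

Lemma zsum_delta0 (x : R) : zsum (fun k => if Z.eq_dec k 0%Z then x else 0) = x.
Proof.
  unfold zsum.
  rewrite (Series_first_only (fun n => if Z.eq_dec (Z.of_nat n) 0%Z then x else 0)),
          (Series_first_only (fun n => if Z.eq_dec (- Z.of_nat (S n))%Z 0%Z then x else 0)).
  - simpl. ring.
  - intro n. destruct (Z.eq_dec _ 0%Z); [lia|reflexivity].
  - intro n. destruct (Z.eq_dec _ 0%Z); [lia|reflexivity].
Qed.

Lemma zsummable_succ (g : Z -> R) : zsummable g -> zsummable (fun k => g (k + 1)%Z).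
Proof.
  intros [g_pos g_neg]. split.
  - apply (@ex_series_incr_1 R_AbsRing R_NormedModule) in g_pos.
    revert g_pos. apply (@ex_series_ext R_AbsRing R_NormedModule).
    intro n. do 2 f_equal. lia.
  - apply (@ex_series_incr_1 R_AbsRing R_NormedModule).
    revert g_neg. apply (@ex_series_ext R_AbsRing R_NormedModule).
    intro n. do 2 f_equal. lia.
Qed.

Lemma zsummable_pred (g : Z -> R) : zsummable g -> zsummable (fun k => g (k - 1)%Z).
Proof.
  intros [g_pos g_neg]. split.
  - apply (@ex_series_incr_1 R_AbsRing R_NormedModule).
    revert g_pos. apply (@ex_series_ext R_AbsRing R_NormedModule).
    intro n. do 2 f_equal. lia.
  - apply (@ex_series_incr_1 R_AbsRing R_NormedModule) in g_neg.
    revert g_neg. apply (@ex_series_ext R_AbsRing R_NormedModule).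
    intro n. do 2 f_equal. lia.
Qed.

Lemma zsum_succ (g : Z -> R) : zsummable g -> zsum (fun k => g (k + 1)%Z) = zsum g.
Proof.
  intro g_sum. destruct (zsummable_halves g g_sum) as [g_pos g_neg].
  destruct (zsummable_halves _ (zsummable_succ g g_sum)) as [_ g1_neg].
  unfold zsum.
  rewrite (Series_incr_1 (fun n => g (Z.of_nat n))) by exact g_pos.
  rewrite (Series_incr_1 (fun n => g (- Z.of_nat (S n) + 1)%Z)) by exact g1_neg.
  rewrite (Series_ext (fun n => g (Z.of_nat n + 1)%Z) (fun n => g (Z.of_nat (S n))))
    by (intro; f_equal; lia).
  rewrite (Series_ext (fun n => g (- Z.of_nat (S (S n)) + 1)%Z)
                      (fun n => g (- Z.of_nat (S n))%Z)) by (intro; f_equal; lia).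
  simpl. ring.
Qed.

Lemma zsum_shift (m : Z) : forall g : Z -> R, zsummable g ->
  zsum (fun k => g (k + m)%Z) = zsum g.
Proof.
  induction m as [|m IH|m IH] using Z.peano_ind; intros g g_sum.
  - apply zsum_ext. intro k. f_equal. lia.
  - rewrite <- (zsum_succ g g_sum), <- (IH _ (zsummable_succ g g_sum)).
    apply zsum_ext. intro k. f_equal. lia.
  - pose proof (zsummable_pred g g_sum) as gp_sum.
    transitivity (zsum (fun k => g (k - 1)%Z)).
    + rewrite <- (IH _ gp_sum). apply zsum_ext. intro k. f_equal. lia.
    + rewrite <- (zsum_succ _ gp_sum). apply zsum_ext. intro k. f_equal. lia.
Qed.

(* Bounded symmetric partial sums sum_{|k| <= N} |g k| give absolute
   summability: the window of half-width N+1 contains both one-sided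
   windows of length N+1. *)
Lemma zsummable_of_symmetric_bound (g : Z -> R) (B : R) :
  (forall N, sum_f_R0 (fun i => Rabs (g (Z.of_nat i - Z.of_nat N)%Z)) (2 * N) <= B) ->
  zsummable g.
Proof.
  intro sym_bnd.
  set (pos := fun n => Rabs (g (Z.of_nat n))).
  set (neg := fun n => Rabs (g (- Z.of_nat (S n))%Z)).
  assert (windows : forall N, sum_f_R0 neg N + sum_f_R0 pos (S N) <= B).
  { intro N. specialize (sym_bnd (S N)).
    rewrite (tech2 _ N (2 * S N)) in sym_bnd by lia.
    replace (2 * S N - S N)%nat with (S N) in sym_bnd by lia.
    replace (sum_f_R0 neg N) with
      (sum_f_R0 (fun i => Rabs (g (Z.of_nat i - Z.of_nat (S N))%Z)) N).
    2:{ rewrite <- sum_f_R0_skip. apply sum_eq. intros i Hi. unfold neg.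
        do 2 f_equal. rewrite Nat2Z.inj_sub by lia. lia. }
    replace (sum_f_R0 pos (S N)) with
      (sum_f_R0 (fun i => Rabs (g (Z.of_nat (S N + i) - Z.of_nat (S N))%Z)) (S N)).
    2:{ apply sum_eq. intros i _. unfold pos. do 2 f_equal. lia. }
    exact sym_bnd. }
  assert (pos_ge0 : forall n, 0 <= pos n) by (intro; apply Rabs_pos).
  assert (neg_ge0 : forall n, 0 <= neg n) by (intro; apply Rabs_pos).
  split; apply (ex_series_bounded_partial_sums _ B); auto; intro N;
    specialize (windows N); rewrite tech5 in windows;
    pose proof (cond_pos_sum neg N neg_ge0); pose proof (cond_pos_sum pos N pos_ge0);
    pose proof (pos_ge0 (S N)); fold pos neg; lra.
Qed.

Lemma kernel_zsummable (chi : R -> R) : M_finite chi 0 ->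
  forall u, 0 < u -> zsummable (fun k => chi (exp (- IZR k) * u)).
Proof.
  intros [B M0_bnd] u u_pos. apply (zsummable_of_symmetric_bound _ B). intro N.
  rewrite <- (M0_bnd u u_pos N). right. apply sum_eq. intros i _.
  unfold pw. destruct (Req_EM_T 0 0) as [_|]; [ring|lra].
Qed.

Definition jump (x y z : R) (k : Z) : R :=
  if Z_lt_dec 0 k then x else if Z_lt_dec k 0 then y else z.

(* Splitting Z into k > log 1 = 0, k < 0 and k = 0 expresses the kernel
   average of a step profile through psi^-(1), psi^+(1) and chi(1). *)
Lemma kernel_jump_sum (chi : R -> R) (x y z : R) : M_finite chi 0 ->
  zsum (fun k => chi (exp (- IZR k) * 1) * jump x y z k) =
  x * psi_minus chi 1 + y * psi_plus chi 1 + z * chi 1.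
Proof.
  intro M0. pose proof (kernel_zsummable chi M0 1 Rlt_0_1) as a_sum.
  set (a := fun k : Z => chi (exp (- IZR k) * 1)) in *.
  set (right_part := fun k => if Rlt_dec (ln 1) (IZR k) then a k else 0).
  set (left_part := fun k => if Rlt_dec (IZR k) (ln 1) then a k else 0).
  set (center := fun k => if Z.eq_dec k 0%Z then chi 1 else 0).
  assert (parts_le : forall k, Rabs (right_part k) <= Rabs (a k) /\
            Rabs (left_part k) <= Rabs (a k) /\ Rabs (center k) <= Rabs (a k)).
  { intro k. unfold right_part, left_part, center. pose proof (Rabs_pos (a k)).
    destruct (Rlt_dec _ _), (Rlt_dec _ _), (Z.eq_dec k 0%Z) as [->|];
      rewrite ?Rabs_R0; repeat split; try lra.
    all: unfold a; rewrite Ropp_0, exp_0, Rmult_1_l; lra. }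
  assert (step : forall k, a k * jump x y z k =
                   x * right_part k + (y * left_part k + z * center k)).
  { intro k. unfold jump, right_part, left_part, center. rewrite ln_1.
    destruct (Z.lt_trichotomy 0 k) as [k_pos|[<-|k_neg]].
    - pose proof (IZR_lt _ _ k_pos).
      destruct (Z_lt_dec 0 k), (Rlt_dec 0 (IZR k)), (Rlt_dec (IZR k) 0),
        (Z.eq_dec k 0%Z); try lia; lra.
    - unfold a. simpl. rewrite Ropp_0, exp_0, Rmult_1_l.
      destruct (Rlt_dec 0 0); lra.
    - pose proof (IZR_lt _ _ k_neg).
      destruct (Z_lt_dec 0 k), (Z_lt_dec k 0), (Rlt_dec 0 (IZR k)),
        (Rlt_dec (IZR k) 0), (Z.eq_dec k 0%Z); try lia; lra. }
  assert (scaled_sum : forall (c : R) (p : Z -> R), (forall k, Rabs (p k) <= Rabs (a k)) ->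
            zsummable (fun k => c * p k)).
  { intros c p p_le. apply (zsummable_le _ a (Rabs c)); auto. intro k.
    rewrite Rabs_mult. apply Rmult_le_compat_l; [apply Rabs_pos|apply p_le]. }
  assert (rest_sum : zsummable (fun k => y * left_part k + z * center k)).
  { apply (zsummable_le _ a (Rabs y + Rabs z)); auto. intro k.
    destruct (parts_le k) as (_ & left_le & center_le).
    eapply Rle_trans; [apply Rabs_triang|]. rewrite !Rabs_mult.
    pose proof (Rabs_pos y). pose proof (Rabs_pos z). nra. }
  rewrite (zsum_ext (fun k => chi (exp (- IZR k) * 1) * jump x y z k) _ step).
  rewrite !zsum_plus, !zsum_scal; try apply scaled_sum; try apply parts_le; auto.
  unfold center. rewrite zsum_delta0, Rplus_assoc. reflexivity.
Qed.

(* psi^-(1) + psi^+(1) + chi(1) = 1: the kernel average of the constant 1. *)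
Lemma psi_total (chi : R -> R) : is_kernel chi ->
  psi_minus chi 1 + psi_plus chi 1 + chi 1 = 1.
Proof.
  intros [partition [M0 _]].
  pose proof (kernel_jump_sum chi 1 1 1 M0) as average_of_one.
  rewrite !Rmult_1_l in average_of_one. rewrite <- average_of_one.
  transitivity (zsum (fun k => chi (exp (- IZR k) * 1))).
  - apply zsum_ext. intro k. unfold jump.
    destruct (Z_lt_dec 0 k), (Z_lt_dec k 0); ring.
  - exact (partition 1 Rlt_0_1).
Qed.

Definition eventually_on (Q P : R -> Prop) : Prop :=
  exists W, forall w, W < w -> Q w -> P w.

Lemma eventually_on_and (Q P1 P2 : R -> Prop) :
  eventually_on Q P1 -> eventually_on Q P2 -> eventually_on Q (fun w => P1 w /\ P2 w).
Proof.
  intros [W1 H1] [W2 H2]. exists (Rmax W1 W2). intros w Hw Qw.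
  pose proof (Rmax_l W1 W2). pose proof (Rmax_r W1 W2).
  split; [apply H1|apply H2]; auto; lra.
Qed.

Lemma eventually_on_mono (Q P1 P2 : R -> Prop) :
  (forall w, Q w -> P1 w -> P2 w) -> eventually_on Q P1 -> eventually_on Q P2.
Proof. intros P12 [W HW]. exists W. intros w Hw Qw. auto. Qed.

Lemma eventually_on_restrict (Q Q' P : R -> Prop) :
  (forall w, Q' w -> Q w) -> eventually_on Q P -> eventually_on Q' P.
Proof. intros QQ' [W HW]. exists W. auto. Qed.

Lemma finite_sum_eventually_small (Q : R -> Prop) (v : R -> nat -> R) :
  (forall n eps, 0 < eps -> eventually_on Q (fun w => Rabs (v w n) < eps)) ->
  forall N eps, 0 < eps -> eventually_on Q (fun w => Rabs (sum_f_R0 (v w) N) < eps).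
Proof.
  intros v_small N. induction N as [|N IH]; intros eps eps_pos; [apply v_small; exact eps_pos|].
  apply (eventually_on_mono Q (fun w => Rabs (sum_f_R0 (v w) N) < eps / 2 /\
                                        Rabs (v w (S N)) < eps / 2)).
  - intros w _ [head last]. rewrite tech5.
    pose proof (Rabs_triang (sum_f_R0 (v w) N) (v w (S N))). lra.
  - apply eventually_on_and; [apply IH|apply v_small]; lra.
Qed.

Lemma series_tannery (Q : R -> Prop) (a : nat -> R) (e : R -> nat -> R) (C : R) :
  ex_series (fun n => Rabs (a n)) ->
  (forall w n, Q w -> Rabs (e w n) <= C) ->
  (forall n eps, 0 < eps -> eventually_on Q (fun w => Rabs (e w n) < eps)) ->
  forall eps, 0 < eps -> eventually_on Q (fun w => Rabs (Series (fun n => a n * e w n)) < eps).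
Proof.
  intros a_cv e_bnd e_small eps eps_pos.
  set (delta := eps / (2 * (Rabs C + 1))).
  assert (delta_pos : 0 < delta) by (unfold delta; pose proof (Rabs_pos C);
                                      apply Rdiv_lt_0_compat; lra).
  assert (C_delta : Rabs C * delta <= eps / 2).
  { unfold delta. pose proof (Rabs_pos C).
    apply (Rmult_le_reg_r (2 * (Rabs C + 1))); [lra|].
    field_simplify; [nra|lra]. }
  destruct (Series_tail_small _ a_cv delta delta_pos) as [N tail_small].
  set (tail := Series (fun k => Rabs (a (S N + k)%nat))) in tail_small.
  assert (weighted_le : forall w n, Q w -> Rabs (a n * e w n) <= C * Rabs (a n)).
  { intros w n Qw. rewrite Rabs_mult, Rmult_comm.
    apply Rmult_le_compat_r; [apply Rabs_pos|auto]. }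
  assert (head_small : eventually_on Q
            (fun w => Rabs (sum_f_R0 (fun n => Rabs (a n * e w n)) N) < eps / 2)).
  { apply (finite_sum_eventually_small Q (fun w n => Rabs (a n * e w n))); [|lra].
    intros n eps' eps'_pos.
    assert (scale_pos : 0 < eps' / (Rabs (a n) + 1))
      by (pose proof (Rabs_pos (a n)); apply Rdiv_lt_0_compat; lra).
    eapply eventually_on_mono; [|exact (e_small n _ scale_pos)].
    intros w _ e_lt. simpl in e_lt |- *. rewrite Rabs_Rabsolu, Rabs_mult. pose proof (Rabs_pos (a n)).
    apply (Rle_lt_trans _ (Rabs (a n) * (eps' / (Rabs (a n) + 1)))).
    - apply Rmult_le_compat_l; lra.
    - apply (Rmult_lt_reg_r (Rabs (a n) + 1)); [lra|]. field_simplify; lra. }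
  eapply eventually_on_mono; [|exact head_small]. intros w Qw head. simpl in head |- *.
  assert (abs_cv : ex_series (fun n => Rabs (a n * e w n))).
  { apply (@ex_series_le R_AbsRing R_CompleteNormedModule _ (fun n => C * Rabs (a n))).
    - intro n. rewrite Rabs_Rabsolu. auto.
    - exact (@ex_series_scal_l R_AbsRing R_NormedModule C _ a_cv). }
  assert (tail_le : Series (fun k => Rabs (a (S N + k)%nat * e w (S N + k)%nat)) <= C * tail).
  { unfold tail. rewrite <- Series_scal_l. apply Series_le.
    - intro k. split; [apply Rabs_pos|auto].
    - apply (@ex_series_scal_l R_AbsRing R_NormedModule C).
      exact (proj1 (@ex_series_incr_n R_AbsRing R_NormedModule _ (S N)) a_cv). }
  eapply Rle_lt_trans; [exact (Series_Rabs _ abs_cv)|].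
  rewrite (Series_incr_n _ (S N)) by (lia || exact abs_cv). simpl pred.
  pose proof (Rle_abs (sum_f_R0 (fun n => Rabs (a n * e w n)) N)).
  pose proof (Rle_abs (C * tail)). rewrite Rabs_mult in *.
  pose proof (Rabs_pos C).
  assert (Rabs C * Rabs tail <= Rabs C * delta) by (apply Rmult_le_compat_l; lra).
  lra.
Qed.

Lemma zsum_tannery (Q : R -> Prop) (a : Z -> R) (e : R -> Z -> R) (C : R) :
  zsummable a ->
  (forall w k, Q w -> Rabs (e w k) <= C) ->
  (forall k eps, 0 < eps -> eventually_on Q (fun w => Rabs (e w k) < eps)) ->
  forall eps, 0 < eps -> eventually_on Q (fun w => Rabs (zsum (fun k => a k * e w k)) < eps).
Proof.
  intros [a_pos a_neg] e_bnd e_small eps eps_pos.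
  apply (eventually_on_mono Q
    (fun w => Rabs (Series (fun n => a (Z.of_nat n) * e w (Z.of_nat n))) < eps / 2 /\
              Rabs (Series (fun n => a (- Z.of_nat (S n))%Z * e w (- Z.of_nat (S n))%Z))
                < eps / 2)).
  - intros w _ [pos_small neg_small]. unfold zsum.
    pose proof (Rabs_triang (Series (fun n => a (Z.of_nat n) * e w (Z.of_nat n)))
                  (Series (fun n => a (- Z.of_nat (S n))%Z * e w (- Z.of_nat (S n))%Z))).
    lra.
  - apply eventually_on_and;
      [apply (series_tannery Q _ (fun w n => e w (Z.of_nat n)) C)
      |apply (series_tannery Q _ (fun w n => e w (- Z.of_nat (S n))%Z) C)];
      auto; lra.
Qed.

Lemma right_limit_eps (f : R -> R) (t l : R) : filterlim f (at_right t) (locally l) ->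
  forall eps, 0 < eps -> exists d, 0 < d /\ forall x, t < x < t + d -> Rabs (f x - l) < eps.
Proof.
  intros f_lim eps eps_pos.
  destruct (proj1 (filterlim_locally f l) f_lim (mkposreal eps eps_pos)) as [d Hd].
  exists d. split; [apply cond_pos|]. intros x Hx. apply Hd; [|lra].
  change (Rabs (x - t) < d). rewrite Rabs_right; lra.
Qed.

Lemma left_limit_eps (f : R -> R) (t l : R) : filterlim f (at_left t) (locally l) ->
  forall eps, 0 < eps -> exists d, 0 < d /\ forall x, t - d < x < t -> Rabs (f x - l) < eps.
Proof.
  intros f_lim eps eps_pos.
  destruct (proj1 (filterlim_locally f l) f_lim (mkposreal eps eps_pos)) as [d Hd].
  exists d. split; [apply cond_pos|]. intros x Hx. apply Hd; [|lra].
  change (Rabs (x - t) < d). rewrite Rabs_left; lra.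
Qed.

Lemma scaled_exp_right (t y d : R) : 0 < t -> 0 < y -> 0 < d ->
  eventually_on (fun w => 0 < w) (fun w => t < t * exp (y / w) < t + d).
Proof.
  intros t_pos y_pos d_pos.
  set (L := ln (1 + d / t)).
  assert (L_pos : 0 < L).
  { unfold L. rewrite <- ln_1. apply ln_increasing; [lra|].
    pose proof (Rdiv_lt_0_compat d t d_pos t_pos). lra. }
  exists (y / L). intros w w_large w_pos.
  assert (ratio_pos : 0 < y / w) by (apply Rdiv_lt_0_compat; lra).
  assert (ratio_small : y / w < L).
  { apply (Rmult_lt_reg_r w); [lra|]. apply (Rmult_lt_compat_r L) in w_large; [|lra].
    field_simplify in w_large; [|lra]. field_simplify; lra. }
  assert (exp_gt1 : 1 < exp (y / w)) by (rewrite <- exp_0; apply exp_increasing; lra).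
  assert (exp_lt : exp (y / w) < 1 + d / t).
  { rewrite <- (exp_ln (1 + d / t)); [apply exp_increasing; exact ratio_small|].
    pose proof (Rdiv_lt_0_compat d t d_pos t_pos). lra. }
  split; [nra|]. apply (Rmult_lt_compat_l t) in exp_lt; [|lra].
  field_simplify in exp_lt; lra.
Qed.

Lemma scaled_exp_left (t y d : R) : 0 < t -> y < 0 -> 0 < d ->
  eventually_on (fun w => 0 < w) (fun w => t - d < t * exp (y / w) < t).
Proof.
  intros t_pos y_neg d_pos. exists (- (t * y) / d). intros w w_large w_pos.
  assert (ratio_neg : y / w < 0).
  { apply (Rmult_lt_reg_r w); [lra|]. field_simplify; lra. }
  assert (exp_lt1 : exp (y / w) < 1) by (rewrite <- exp_0; apply exp_increasing; lra).
  assert (near : - d < t * (y / w)).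
  { apply (Rmult_lt_reg_r w); [lra|]. apply (Rmult_lt_compat_r d) in w_large; [|lra].
    field_simplify in w_large; [|lra]. field_simplify; lra. }
  pose proof (exp_ineq1_le (y / w)). split; nra.
Qed.

Lemma samples_tend_to_jump (f : R -> R) (t fp fm : R) : 0 < t ->
  filterlim f (at_right t) (locally fp) -> filterlim f (at_left t) (locally fm) ->
  forall k eps, 0 < eps -> eventually_on (fun w => 0 < w)
    (fun w => Rabs (f (t * exp (IZR k / w)) - jump fp fm (f t) k) < eps).
Proof.
  intros t_pos f_right f_left k eps eps_pos. unfold jump.
  destruct (Z_lt_dec 0 k) as [k_pos|k_nonpos]; [|destruct (Z_lt_dec k 0) as [k_neg|k_zero]].
  - destruct (right_limit_eps f t fp f_right eps eps_pos) as [d [d_pos Hd]].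
    eapply eventually_on_mono; [|apply (scaled_exp_right t (IZR k) d); auto; apply IZR_lt; exact k_pos].
    intros w _ node. apply Hd. exact node.
  - destruct (left_limit_eps f t fm f_left eps eps_pos) as [d [d_pos Hd]].
    eapply eventually_on_mono; [|apply (scaled_exp_left t (IZR k) d); auto; apply IZR_lt; exact k_neg].
    intros w _ node. apply Hd. exact node.
  - assert (k = 0%Z) as -> by lia. exists 0. intros w _ w_pos.
    rewrite Rdiv_0_l, exp_0, Rmult_1_r, Rminus_eq_0, Rabs_R0. exact eps_pos.
Qed.

Definition lattice_point (t w : R) : Prop := 0 < w /\ exists m : Z, w * ln t = IZR m.

(* At a lattice point t^w = e^m, so translating the index by m recentres
   the sampling series at t. *)
Lemma sampling_on_lattice (chi f : R -> R) (t w : R) (m : Z) :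
  M_finite chi 0 -> bounded_pos f -> 0 < t -> 0 < w -> w * ln t = IZR m ->
  S_w chi f w t = zsum (fun k => chi (exp (- IZR k) * 1) * f (t * exp (IZR k / w))).
Proof.
  intros M0 [Bf f_bnd] t_pos w_pos lattice.
  assert (power : Rpower t w = exp (IZR m)) by (unfold Rpower; rewrite lattice; reflexivity).
  assert (ln_t : IZR m / w = ln t) by (rewrite <- lattice; field; lra).
  unfold S_w. rewrite power, <- (zsum_shift m).
  - apply zsum_ext. intro k. rewrite plus_IZR. f_equal.
    + f_equal. rewrite Rmult_1_r, <- exp_plus. f_equal. ring.
    + f_equal. replace ((IZR k + IZR m) / w) with (IZR k / w + ln t)
        by (rewrite <- ln_t; field; lra).
      rewrite exp_plus, exp_ln by exact t_pos. ring.
  - apply (zsummable_le _ (fun k => chi (exp (- IZR k) * exp (IZR m))) Bf).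
    + intro k. rewrite Rabs_mult, Rmult_comm.
      apply Rmult_le_compat_r; [apply Rabs_pos|apply f_bnd, exp_pos].
    + apply kernel_zsummable; [exact M0|apply exp_pos].
Qed.

(* Along lattice points the sampling series converges to
   f(t+0) psi^-(1) + f(t-0) psi^+(1) + f(t) chi(1): by Tannery's theorem the
   recentred series differs from the kernel average of the step profile by
   a vanishing amount. *)
Lemma sampling_limit (chi f : R -> R) (t fp fm : R) :
  M_finite chi 0 -> bounded_pos f -> 0 < t ->
  filterlim f (at_right t) (locally fp) -> filterlim f (at_left t) (locally fm) ->
  lim_along_lattice (fun w => S_w chi f w t) t
    (fp * psi_minus chi 1 + fm * psi_plus chi 1 + f t * chi 1).
Proof.
  intros M0 f_bnd t_pos f_right f_left eps eps_pos.
  pose proof f_bnd as [Bf f_le].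
  pose proof (kernel_zsummable chi M0 1 Rlt_0_1) as a_sum.
  set (a := fun k : Z => chi (exp (- IZR k) * 1)) in a_sum.
  set (step := jump fp fm (f t)).
  assert (step_le : forall k, Rabs (step k) <= Bf + Rabs fp + Rabs fm).
  { intro k. unfold step, jump. pose proof (f_le t t_pos). pose proof (Rabs_pos (f t)).
    pose proof (Rabs_pos fp). pose proof (Rabs_pos fm).
    destruct (Z_lt_dec 0 k), (Z_lt_dec k 0); lra. }
  assert (summable_times : forall (c : R) (p : Z -> R), (forall k, Rabs (p k) <= c) ->
            zsummable (fun k => a k * p k)).
  { intros c p p_le. apply (zsummable_le _ a c); [intro k|exact a_sum].
    rewrite Rabs_mult, Rmult_comm. apply Rmult_le_compat_r; [apply Rabs_pos|auto]. }
  destruct (zsum_tannery (lattice_point t) a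
              (fun w k => f (t * exp (IZR k / w)) - step k) (2 * Bf + Rabs fp + Rabs fm)
              a_sum) with (eps := eps) as [W HW]; auto.
  - intros w k [w_pos _]. eapply Rle_trans; [apply Rabs_triang|]. rewrite Rabs_Ropp.
    pose proof (f_le (t * exp (IZR k / w)) (Rmult_lt_0_compat _ _ t_pos (exp_pos _))).
    pose proof (step_le k). lra.
  - intros k eps' eps'_pos.
    apply (eventually_on_restrict (fun w => 0 < w)); [intros w []; auto|].
    apply samples_tend_to_jump; assumption.
  - exists W. intros w w_large w_pos [m lattice].
    rewrite (sampling_on_lattice chi f t w m M0 f_bnd t_pos w_pos lattice).
    rewrite <- (kernel_jump_sum chi fp fm (f t) M0), <- zsum_minus.
    + erewrite zsum_ext; [apply (HW w w_large (conj w_pos (ex_intro _ m lattice)))|].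
      intro k. unfold a, step. ring.
    + apply (summable_times Bf). intro k.
      apply f_le, Rmult_lt_0_compat; [exact t_pos|apply exp_pos].
    + apply (summable_times _ _ step_le).
Qed.

Lemma lattice_point_unbounded (t X : R) : exists w, X < w /\ lattice_point t w.
Proof.
  set (Y := Rmax X 0 + 1).
  assert (Y_large : X < Y /\ 0 < Y) by (unfold Y; pose proof (Rmax_l X 0); pose proof (Rmax_r X 0); lra).
  destruct (Req_dec (ln t) 0) as [ln_zero|ln_nonzero].
  - exists Y. split; [lra|]. split; [lra|]. exists 0%Z. rewrite ln_zero. simpl. ring.
  - set (A := Rabs (ln t)). assert (A_pos : 0 < A) by (apply Rabs_pos_lt; exact ln_nonzero).
    destruct (archimed (Y * A)) as [up_gt _]. set (z := up (Y * A)) in up_gt.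
    assert (beyond : Y < IZR z / A).
    { apply (Rmult_lt_reg_r A); [exact A_pos|]. field_simplify; lra. }
    exists (IZR z / A). split; [lra|]. split; [lra|].
    destruct (Rle_lt_dec 0 (ln t)).
    + exists z. replace A with (ln t) by (symmetry; apply Rabs_right; lra). field. exact ln_nonzero.
    + exists (- z)%Z. replace A with (- ln t) by (symmetry; apply Rabs_left; lra).
      rewrite opp_IZR. field. lra.
Qed.

Lemma lattice_limit_unique (F : R -> R) (t L1 L2 : R) :
  lim_along_lattice F t L1 -> lim_along_lattice F t L2 -> L1 = L2.
Proof.
  intros lim1 lim2. destruct (Req_dec L1 L2) as [|L_ne]; [assumption|exfalso].
  set (e := Rabs (L1 - L2) / 2).
  assert (e_pos : 0 < e) by (apply Rdiv_lt_0_compat; [apply Rabs_pos_lt|]; lra).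
  destruct (lim1 e e_pos) as [W1 HW1], (lim2 e e_pos) as [W2 HW2].
  destruct (lattice_point_unbounded t (Rmax W1 W2)) as [w [w_large [w_pos lattice]]].
  pose proof (Rmax_l W1 W2). pose proof (Rmax_r W1 W2).
  specialize (HW1 w ltac:(lra) w_pos lattice). specialize (HW2 w ltac:(lra) w_pos lattice).
  pose proof (Rabs_triang (F w - L2) (- (F w - L1))). rewrite Rabs_Ropp in *.
  replace (F w - L2 + - (F w - L1)) with (L1 - L2) in * by ring.
  unfold e in *. lra.
Qed.

(* f(t+0) = fp, f(t-0) = fm, fp <> fm : non-removable jump at t *)
Theorem theorem2 (chi f : R -> R) (t alpha fp fm : R) :
  is_kernel chi -> bounded_pos f -> 0 < t ->
  filterlim f (at_right t) (locally fp) ->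
  filterlim f (at_left t) (locally fm) ->
  fp <> fm ->
  (lim_along_lattice (fun w => S_w chi f w t) t
      (alpha * fp + (1 - alpha - chi 1) * fm + chi 1 * f t)
    <-> psi_minus chi 1 = alpha) /\
  (psi_minus chi 1 = alpha <-> psi_plus chi 1 = 1 - alpha - chi 1).
Proof.
  intros kernel f_bnd t_pos f_right f_left jump_ne.
  pose proof (sampling_limit chi f t fp fm (proj1 (proj2 kernel)) f_bnd t_pos f_right f_left)
    as limit.
  pose proof (psi_total chi kernel) as total.
  assert (gap : alpha * fp + (1 - alpha - chi 1) * fm + chi 1 * f t
                - (fp * psi_minus chi 1 + fm * psi_plus chi 1 + f t * chi 1)
                = (alpha - psi_minus chi 1) * (fp - fm)).
  { replace (psi_plus chi 1) with (1 - psi_minus chi 1 - chi 1) by lra. ring. }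
  split; [split|split; intro; lra].
  - intro lim_alpha.
    rewrite (lattice_limit_unique _ _ _ _ lim_alpha limit), Rminus_eq_0 in gap.
    destruct (Rmult_integral _ _ (eq_sym gap)) as [alpha_eq|jump_zero]; lra.
  - intro psi_alpha. rewrite psi_alpha in limit, gap. rewrite Rminus_eq_0, Rmult_0_l in gap.
    apply Rminus_diag_uniq in gap. rewrite gap. exact limit.
Qed.
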